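(* Let $\lambda=\{k_1,\dots,k_q\}$ be a partition of a positive integer $k$ and let $G$ be a graph. Then $G$ is $\lambda$-choosable if and only if $G$ is $L$-colourable for every special $\lambda$-assignment $L$ of $G$.
   Context: A partition of a positive integer $k$ is a finite multiset $\lambda=\{k_1,\dots,k_q\}$ of positive integers with $k_1+\dots+k_q=k$; the $k_i$ are its parts. An assignment $L$ of a graph $G$ assigns to each vertex $v$ a set $L(v)$ of colours; a $k$-assignment has $|L(v)|=k$ for all $v$; $G$ is $L$-colourable if there is a proper colouring $f$ with $f(v)\in L(v)$ for all $v$. A $\lambda$-assignment of $G$ is a $k$-assignment $L$ such that the colour set $\bigcup_{v\in V(G)}L(v)$ can be partitioned into sets $C_1,\dots,C_q$ (colour groups) with $|L(v)\cap C_i|=k_i$ for every vertex $v$ and every $i$. $G$ is $\lambda$-choosable if $G$ is $L$-colourable for every $\lambda$-assignment $L$. A $\lambda$-assignment $L$ with colour groups $C_1,\dots,C_q$ is special if $C_i$ is a singleton for every $i$ with $k_i=1$. *)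

From mathcomp Require Import all_boot.
Set Implicit Arguments. Unset Strict Implicit. Unset Printing Implicit Defensive.

(* A graph: vertex set V (a finType), adjacency relation adj (symmetric,
   irreflexive assumed in the theorem).
   A colour set L(v) is represented by a duplicate-free list of colours.
   A partition lambda = {k_1,...,k_q} is a list of positive parts (order
   irrelevant); k = sumn lambda, q = size lambda, k_i = nth 0 lambda i. *)

Section Colouring.
Variables (V : finType) (C : eqType).

Definition in_union (L : V -> seq C) (c : C) : Prop := exists v, c \in L v.

Definition k_assignment (k : nat) (L : V -> seq C) : Prop :=
  forall v, uniq (L v) /\ size (L v) = k.

(* g assigns to each colour of the union a group index; the colour groups are
   C_i = {c in union | g c = i}, i < q; they partition the union and
   |L(v) ∩ C_i| = k_i for all v and i. *)
Definition colour_groups (lam : seq nat) (L : V -> seq C) (g : C -> nat) : Prop :=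
  (forall c, in_union L c -> g c < size lam) /\
  (forall v i, i < size lam -> count (fun c => g c == i) (L v) = nth 0 lam i).

Definition lambda_assignment (lam : seq nat) (L : V -> seq C) : Prop :=
  k_assignment (sumn lam) L /\ exists g, colour_groups lam L g.

Definition special_lambda_assignment (lam : seq nat) (L : V -> seq C) : Prop :=
  k_assignment (sumn lam) L /\
  exists g, colour_groups lam L g /\
    forall i, i < size lam -> nth 0 lam i = 1 ->
      exists c0, forall c, (in_union L c /\ g c = i) <-> c = c0.

Definition L_colourable (adj : rel V) (L : V -> seq C) : Prop :=
  exists f : V -> C, (forall v, f v \in L v) /\
    (forall u v, adj u v -> f u != f v).

Definition lambda_choosable (adj : rel V) (lam : seq nat) : Prop :=
  forall L : V -> seq C, lambda_assignment lam L -> L_colourable adj L.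

End Colouring.

From mathcomp Require Import all_boot.
Set Implicit Arguments. Unset Strict Implicit. Unset Printing Implicit Defensive.

(* Every special lambda-assignment is a lambda-assignment, so only the converse
   needs work.  Given a lambda-assignment L with colour groups g, collapse each
   group C_i with k_i = 1 onto a single representative colour.  Each list L(v)
   meets such a group in exactly one colour, so the collapse is injective on
   L(v) and turns L into a special lambda-assignment L'.  A proper
   L'-colouring pulls back along the collapse to a proper L-colouring. *)

Lemma count_eq1_eq (T : eqType) (p : pred T) (s : seq T) x y :
  count p s = 1 -> x \in s -> p x -> y \in s -> p y -> x = y.
Proof.
rewrite -size_filter => s_p1 sx px sy py.
have: x \in filter p s by rewrite mem_filter px sx.
have: y \in filter p s by rewrite mem_filter py sy.
by case: (filter p s) s_p1 => [|z [|]] //= _; rewrite !inE => /eqP -> /eqP ->.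
Qed.

Section Colourings.
Variables (V : finType) (C : eqType) (adj : rel V).

Lemma L_colourable_card0 (L : V -> seq C) : #|V| = 0 -> L_colourable adj L.
Proof.
move=> /card0_eq V0; have no_vertex (v : V) : False by have := V0 v; rewrite !inE.
by exists (fun v => False_rect C (no_vertex v)); split => v; case: (no_vertex v).
Qed.

(* Any preimage under [phi] of the colour of [v] works: distinct images have
   distinct preimages. *)
Lemma L_colourable_map (phi : C -> C) (L : V -> seq C) :
  L_colourable adj (fun v => map phi (L v)) -> L_colourable adj L.
Proof.
move=> [f [f_in f_proper]].
pose f' v := nth (f v) (L v) (index (f v) (map phi (L v))).
have phi_f' v : phi (f' v) = f v.
  have idx_lt : index (f v) (map phi (L v)) < size (L v).
    by rewrite -(size_map phi) index_mem.
  by rewrite -(nth_map (f v) (f v) phi idx_lt) nth_index.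
exists f'; split => [v|u v uv].
  by rewrite mem_nth // -(size_map phi) index_mem.
by apply: contra_neq (f_proper u v uv) => f'_uv; rewrite -phi_f' f'_uv phi_f'.
Qed.

Lemma special_lambda_assignmentW (lam : seq nat) (L : V -> seq C) :
  special_lambda_assignment lam L -> lambda_assignment lam L.
Proof. by move=> [kL [g [gL _]]]; split; last exists g. Qed.

End Colourings.

Section Collapse.
Variables (V : finType) (C : eqType) (lam : seq nat) (L : V -> seq C).
Variables (g : C -> nat) (v0 : V).
Hypotheses (kL : k_assignment (sumn lam) L) (gL : colour_groups lam L g).

Definition unit_part i := (i < size lam) && (nth 0 lam i == 1).

(* The default [c] is irrelevant for unit parts, see [group_rep_default]. *)
Definition group_rep i c := nth c [seq x <- L v0 | g x == i] 0.

Definition collapse c := if unit_part (g c) then group_rep (g c) c else c.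

Lemma count_unit_part v i : unit_part i -> count (fun c => g c == i) (L v) = 1.
Proof. by case/andP=> lt_i /eqP <-; apply: gL.2. Qed.

Lemma group_rep_default i c c' : unit_part i -> group_rep i c = group_rep i c'.
Proof.
move/(count_unit_part v0); rewrite -size_filter => s1.
by apply: set_nth_default; rewrite s1.
Qed.

Lemma group_repP i c : unit_part i -> group_rep i c \in L v0 /\ g (group_rep i c) = i.
Proof.
move/(count_unit_part v0); rewrite -size_filter => s1.
have: group_rep i c \in [seq x <- L v0 | g x == i] by apply: mem_nth; rewrite s1.
by rewrite mem_filter => /andP[/eqP -> ->].
Qed.

Lemma collapse_group c : g (collapse c) = g c.
Proof. by rewrite /collapse; case: ifP => // /(group_repP c) []. Qed.

Lemma collapse_inj_in v : {in L v &, injective collapse}.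
Proof.
move=> x y Lx Ly xy.
have gxy : g x = g y by rewrite -collapse_group xy collapse_group.
move: xy; rewrite /collapse -gxy; case: ifP => // unit_x _.
by move/count_eq1_eq: (count_unit_part v unit_x); apply; rewrite //= gxy.
Qed.

Lemma special_collapse :
  special_lambda_assignment lam (fun v => map collapse (L v)).
Proof.
split.
  move=> v; have [uL sL] := kL v.
  by rewrite size_map map_inj_in_uniq //; apply: collapse_inj_in.
exists g; split; first split.
- by move=> _ [v /mapP[c Lc ->]]; rewrite collapse_group; apply: gL.1; exists v.
- move=> v i lt_i; rewrite count_map -(gL.2 v i lt_i).
  by apply: eq_count => c /=; rewrite collapse_group.
move=> i lt_i lam_i; have unit_i : unit_part i by rewrite /unit_part lt_i lam_i.
have: 0 < count (fun c => g c == i) (L v0) by rewrite count_unit_part.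
rewrite -has_count => /hasP[c0 L0c0 /eqP gc0].
exists (collapse c0) => c; split.
  case=> -[v /mapP[c' _ ->]]; rewrite collapse_group => gc'.
  by rewrite /collapse gc' gc0 unit_i; apply: group_rep_default.
by move=> ->; split; [exists v0; apply: map_f | rewrite collapse_group].
Qed.

End Collapse.

Theorem lemma1 (lam : seq nat) (Hparts : all (fun x => 0 < x) lam)
  (Hk : 0 < sumn lam)
  (V : finType) (adj : rel V) (Hsym : symmetric adj) (Hirr : irreflexive adj)
  (C : eqType) :
  lambda_choosable C adj lam <->
  (forall L : V -> seq C, special_lambda_assignment lam L -> L_colourable adj L).
Proof.
split=> [choosable L /special_lambda_assignmentW|special_colourable L [kL [g gL]]].
  exact: choosable.
have [v0 _ | V0] := pickP (@predT V); last first.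
  by apply: L_colourable_card0; apply: eq_card0.
apply: (L_colourable_map (phi := collapse lam L g v0)).
exact/special_colourable/special_collapse.
Qed.
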